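(* Consider the network described in the context with homogeneous all-to-all coupling $\varepsilon_{ij}=(1-\delta_{ij})\varepsilon$, $\varepsilon>0$, $(N-1)\varepsilon<1$, with an arbitrary rise function $U$ and an arbitrary partial reset function $R$. Then an asynchronous periodic (splay) state exists. More precisely, there is $\sigma^*>0$ with $\big[\bigodot_{s=1}^{N-1}(S_{\sigma^*}\circ H_\varepsilon)\big]\circ S_{\sigma^*}(0)=1$, and the units fire one at a time with all inter-firing intervals equal to $\sigma^*$.
   Context: Model: $N$ units with phases $\phi_i$. A rise function is a smooth $U:[0,\infty)\to[0,\infty)$ with $U'>0$, $U(0)=0$, $U(1)=1$; $U^{-1}$ is its inverse. A partial reset function is a monotonically increasing $R:\mathbb{R}\to\mathbb{R}$ with $R(0)=0$. For $\varepsilon\ge0$, $\sigma\in\mathbb{R}$: $H_\varepsilon(\phi)=U^{-1}(U(\phi)+\varepsilon)$, $J_\varepsilon(\phi)=U^{-1}(R(U(\phi)+\varepsilon-1))$, $S_\sigma(\phi)=\phi+\sigma$. Composition notation: $\bigodot_{s=p}^{q}(S_{\sigma_s}\circ H_{\varepsilon_s}):=S_{\sigma_q}\circ H_{\varepsilon_q}\circ\cdots\circ S_{\sigma_p}\circ H_{\varepsilon_p}$. Dynamics: $\varepsilon_{ij}\ge0$ is the strength of the pulse from unit $j$ to unit $i$. Between events every phase increases at unit rate. When at time $t$ the set $\Theta^{(0)}=\{j:\phi_j(t^-)=1\}$ is nonempty, an avalanche occurs: with $u_i^{(0)}=U(\phi_i(t^-))$, set $u_i^{(k+1)}=u_i^{(k)}+\sum_{j\in\Theta^{(k)}}\varepsilon_{ij}$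 and $\Theta^{(k+1)}=\{i:u_i^{(k)}<1\le u_i^{(k+1)}\}$ until empty; $\Theta=\bigcup_k\Theta^{(k)}$. Then $\phi_i(t^+)=H_{\sum_{j\in\Theta}\varepsilon_{ij}}(\phi_i(t^-))$ for $i\notin\Theta$ and $\phi_i(t^+)=J_{\sum_{j\in\Theta}\varepsilon_{ij}}(\phi_i(t^-))$ for $i\in\Theta$. The return map sends the state just before a fixed reference unit fires to the state just before it fires next. An asynchronous periodic state is a state invariant under the return map in which every avalanche has size $1$. *)

From Stdlib Require Import Reals Lra Lia Arith Bool.
Open Scope R_scope.
Open Scope bool_scope.

(* U : [0,oo) -> [0,oo) smooth with U' > 0, U(0)=0, U(1)=1.
   Represented by a total function R -> R whose values on negative
   arguments are irrelevant.  Smoothness on [0,oo): there is a family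
   D n of successive derivatives with D 0 = U on [0,oo), D n
   differentiable on (0,oo) with derivative D (S n), and every D n
   right-continuous at 0 (so D (S n) 0 is the one-sided derivative).
   U' = D 1 > 0 on [0,oo). *)
Definition rise_function (U : R -> R) : Prop :=
  exists D : nat -> R -> R,
    (forall x, 0 <= x -> D 0%nat x = U x) /\
    (forall n x, 0 < x -> derivable_pt_lim (D n) x (D (S n) x)) /\
    (forall n (eps : R), 0 < eps -> exists delta, 0 < delta /\
        forall x, 0 <= x < delta -> Rabs (D n x - D n 0) < eps) /\
    (forall x, 0 <= x -> 0 < D 1%nat x) /\
    (forall x, 0 <= x -> 0 <= U x) /\
    U 0 = 0 /\ U 1 = 1.

(* Uinv is the inverse of U restricted to [0,oo) (values outside the
   range U([0,oo)) are unspecified). *)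
Definition rise_inverse (U Uinv : R -> R) : Prop :=
  forall x, 0 <= x -> Uinv (U x) = x.

Definition partial_reset (Rst : R -> R) : Prop :=
  (forall x y, x <= y -> Rst x <= Rst y) /\ Rst 0 = 0.

Definition Hmap (U Uinv : R -> R) (e phi : R) : R := Uinv (U phi + e).
Definition Jmap (U Uinv Rst : R -> R) (e phi : R) : R :=
  Uinv (Rst (U phi + e - 1)).
Definition Smap (s phi : R) : R := phi + s.

Fixpoint sum_below (n : nat) (f : nat -> R) : R :=
  match n with
  | O => 0
  | S m => sum_below m f + f m
  end.

Definition Rltb (x y : R) : bool := if Rlt_dec x y then true else false.
Definition Rleb (x y : R) : bool := if Rle_dec x y then true else false.
Definition Reqb (x y : R) : bool := Rleb x y && Rleb y x.

Definition input (N : nat) (eps : nat -> nat -> R) (Th : nat -> bool) (i : nat) : R :=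
  sum_below N (fun j => if Th j then eps i j else 0).

(* k further avalanche rounds: u = u^(m), th = Theta^(m), acc = union so far *)
Fixpoint aval_iter (N : nat) (eps : nat -> nat -> R) (k : nat)
    (u : nat -> R) (th acc : nat -> bool) : nat -> bool :=
  match k with
  | O => acc
  | S k' =>
      let u' := fun i => u i + input N eps th i in
      let th' := fun i => Nat.ltb i N && Rltb (u i) 1 && Rleb 1 (u' i) in
      aval_iter N eps k' u' th' (fun i => acc i || th' i)
  end.

(* The avalanche set Theta triggered by the state phi (phases at t^-).
   At most N rounds are nonempty, so N+1 rounds compute the full union. *)
Definition avalanche (N : nat) (eps : nat -> nat -> R) (U : R -> R)
    (phi : nat -> R) : nat -> bool :=
  let th0 := fun j => Nat.ltb j N && Reqb (phi j) 1 in
  aval_iter N eps (S N) (fun i => U (phi i)) th0 th0.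

(* phases at t^+ *)
Definition post_event (N : nat) (eps : nat -> nat -> R) (U Uinv Rst : R -> R)
    (phi : nat -> R) (i : nat) : R :=
  let Th := avalanche N eps U phi in
  let e := input N eps Th i in
  if Th i then Jmap U Uinv Rst e (phi i) else Hmap U Uinv e (phi i).

(* After the event at state phi (phases at t^-), the phases grow at unit
   rate and the next event occurs after time delta, with phases phi'
   just before it (all <= 1, some = 1). *)
Definition next_event (N : nat) (eps : nat -> nat -> R) (U Uinv Rst : R -> R)
    (phi : nat -> R) (delta : R) (phi' : nat -> R) : Prop :=
  0 <= delta /\
  (forall i, (i < N)%nat -> phi' i = post_event N eps U Uinv Rst phi i + delta) /\
  (forall i, (i < N)%nat -> phi' i <= 1) /\
  (exists i, (i < N)%nat /\ phi' i = 1).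

Definition hom_coupling (e : R) (i j : nat) : R := if Nat.eqb i j then 0 else e.

From Stdlib Require Import Reals Lra Lia Bool Ranalysis5.
Open Scope R_scope.

(* In a splay state the units fire one at a time, every sigma time units, in
   the cyclic order 0, 1, ..., N-1.  Just after firing a unit has phase 0;
   after each of the following firings it receives one pulse e and then
   drifts for time sigma.  Its phase just before the m-th following firing
   is therefore the m-th point [splay_orbit sigma m] of the orbit
   z_0 = sigma, z_{m+1} = H_e(z_m) + sigma, and the splay state exists as
   soon as z_{N-1} = 1 while z_m < 1 and U(z_m) + e < 1 for m < N-1
   (the reference unit reaches threshold exactly when it is its turn, and no
   pulse pushes a waiting unit to threshold).

   It then finds sigma by the intermediate value
   theorem: on a continuous, clamped version of the orbit, z_{N-1} is < 1 for
   sigma = 0 (where U(z_{N-1}) = (N-1) e) and >= 1 for sigma = 1; monotonicity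
   of the orbit in m then shows that the clamping is inactive and that the
   threshold conditions hold ([splay_period_exists]). *)

Lemma sum_below_ext n f g :
  (forall j, (j < n)%nat -> f j = g j) -> sum_below n f = sum_below n g.
Proof.
  induction n as [|n IH]; intros Hfg; simpl; [reflexivity|].
  rewrite IH by (intros; apply Hfg; lia). rewrite Hfg by lia. reflexivity.
Qed.

Lemma sum_below_zero n : sum_below n (fun _ => 0) = 0.
Proof. induction n as [|n IH]; simpl; [reflexivity|]. rewrite IH; ring. Qed.

Lemma sum_below_indicator n k (c : nat -> R) :
  sum_below n (fun j => if Nat.eqb j k then c j else 0) =
  if Nat.ltb k n then c k else 0.
Proof.
  induction n as [|n IH]; simpl.
  - destruct (Nat.ltb_spec k 0); [lia|reflexivity].
  - rewrite IH. destruct (Nat.ltb_spec k n), (Nat.eqb_spec n k), (Nat.ltb_spec k (S n));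
      try lia; subst; ring.
Qed.

Lemma input_ext N eps Th Th' i :
  (forall j, Th j = Th' j) -> input N eps Th i = input N eps Th' i.
Proof. intros HTh; unfold input; apply sum_below_ext; intros; rewrite HTh; reflexivity. Qed.

Lemma input_empty N eps Th i :
  (forall j, Th j = false) -> input N eps Th i = 0.
Proof.
  intros HTh. unfold input. rewrite (sum_below_ext _ _ (fun _ => 0)).
  - apply sum_below_zero.
  - intros j _. rewrite HTh. reflexivity.
Qed.

Lemma input_single N e k i : (k < N)%nat ->
  input N (hom_coupling e) (fun j => Nat.eqb j k) i = hom_coupling e i k.
Proof.
  intros Hk. unfold input. rewrite sum_below_indicator.
  destruct (Nat.ltb_spec k N); [reflexivity|lia].
Qed.

Lemma aval_iter_quiescent N eps k : forall u th acc,
  (forall i, th i = false) -> forall i, aval_iter N eps k u th acc i = acc i.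
Proof.
  induction k as [|k IH]; intros u th acc Hth i; [reflexivity|].
  cbn [aval_iter].
  assert (Hnext : forall j, (Nat.ltb j N && Rltb (u j) 1
                            && Rleb 1 (u j + input N eps th j)) = false).
  { intros j. rewrite input_empty by exact Hth. unfold Rltb, Rleb.
    destruct (Rlt_dec (u j) 1), (Rle_dec 1 (u j + 0)); try lra; apply andb_false_r. }
  rewrite IH by exact Hnext. rewrite Hnext. apply orb_false_r.
Qed.

Lemma avalanche_single N e (U : R -> R) phi k :
  (k < N)%nat -> U 1 = 1 -> phi k = 1 ->
  (forall i, (i < N)%nat -> i <> k -> phi i < 1 /\ U (phi i) + e < 1) ->
  forall i, avalanche N (hom_coupling e) U phi i = Nat.eqb i k.
Proof.
  intros Hk HU1 Hpk Hothers.
  assert (Hfront : forall j, (Nat.ltb j N && Reqb (phi j) 1) = Nat.eqb j k).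
  { intros j. unfold Reqb, Rleb. destruct (Nat.eqb_spec j k) as [->|Hjk].
    - rewrite Hpk. destruct (Nat.ltb_spec k N); [|lia].
      destruct (Rle_dec 1 1); [reflexivity|lra].
    - destruct (Nat.ltb_spec j N) as [Hj|]; [|reflexivity].
      destruct (Hothers j Hj Hjk) as [Hlt _].
      destruct (Rle_dec (phi j) 1), (Rle_dec 1 (phi j)); try lra; reflexivity. }
  assert (Hpulse : forall j, input N (hom_coupling e)
                     (fun j => Nat.ltb j N && Reqb (phi j) 1) j = hom_coupling e j k).
  { intros j. rewrite (input_ext _ _ _ (fun j => Nat.eqb j k)) by exact Hfront.
    apply input_single, Hk. }
  assert (Hsecond : forall j,
    (Nat.ltb j N && Rltb (U (phi j)) 1 && Rleb 1 (U (phi j) +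
      input N (hom_coupling e) (fun j => Nat.ltb j N && Reqb (phi j) 1) j)) = false).
  { intros j. rewrite Hpulse. destruct (Nat.ltb_spec j N) as [Hj|]; [|reflexivity].
    unfold hom_coupling, Rltb, Rleb. destruct (Nat.eqb_spec j k) as [->|Hjk].
    - rewrite Hpk, HU1. destruct (Rlt_dec 1 1); [lra|reflexivity].
    - destruct (Hothers j Hj Hjk) as [_ Hsub].
      destruct (Rle_dec 1 (U (phi j) + e)); [lra|apply andb_false_r]. }
  intros i. unfold avalanche. cbn [aval_iter].
  rewrite aval_iter_quiescent by exact Hsecond.
  rewrite Hsecond, orb_false_r. apply Hfront.
Qed.

Lemma post_event_single N e U Uinv Rst phi k i :
  (k < N)%nat -> U 1 = 1 -> phi k = 1 ->
  (forall i, (i < N)%nat -> i <> k -> phi i < 1 /\ U (phi i) + e < 1) ->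
  Rst 0 = 0 -> Uinv 0 = 0 ->
  post_event N (hom_coupling e) U Uinv Rst phi i =
  if Nat.eqb i k then 0 else Hmap U Uinv e (phi i).
Proof.
  intros Hk HU1 Hpk Hothers HR0 HUinv0. unfold post_event. cbv zeta.
  pose proof (avalanche_single N e U phi k Hk HU1 Hpk Hothers) as Hav.
  rewrite (input_ext _ _ _ (fun j => Nat.eqb j k)) by apply Hav.
  rewrite input_single, Hav by exact Hk.
  unfold hom_coupling. destruct (Nat.eqb_spec i k) as [->|]; [|reflexivity].
  unfold Jmap. rewrite Hpk, HU1. replace (1 + 0 - 1) with 0 by ring.
  rewrite HR0. exact HUinv0.
Qed.

(* Phase, just before the m-th firing after it was reset, of a unit that
   fired at time 0 and then received one pulse at every firing. *)
Definition splay_orbit (U Uinv : R -> R) (e sigma : R) (m : nat) : R :=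
  Nat.iter m (fun x => Smap sigma (Hmap U Uinv e x)) (Smap sigma 0).

(* sigma is a splay period for n + 1 units: the reset unit reaches threshold
   exactly at the n-th following firing, and before that it is below
   threshold and cannot be pushed to threshold by one pulse. *)
Definition splay_period (U Uinv : R -> R) (e : R) (n : nat) (sigma : R) : Prop :=
  splay_orbit U Uinv e sigma n = 1 /\
  forall m, (m < n)%nat ->
    splay_orbit U Uinv e sigma m < 1 /\ U (splay_orbit U Uinv e sigma m) + e < 1.

(* Number of firings, minus one, since unit i last fired, just before the
   k-th event, when event j is the firing of unit j mod N. *)
Definition splay_age (N k i : nat) : nat :=
  if Nat.ltb i k then (k - i - 1)%nat else (k + N - i - 1)%nat.

Lemma splay_age_self N k : (k < N)%nat -> splay_age N k k = (N - 1)%nat.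
Proof. intros; unfold splay_age; destruct (Nat.ltb_spec k k); lia. Qed.

Lemma splay_age_other N k i : (k < N)%nat -> (i < N)%nat -> i <> k ->
  (splay_age N k i < N - 1)%nat.
Proof. intros; unfold splay_age; destruct (Nat.ltb_spec i k); lia. Qed.

Lemma splay_age_succ N k i : (k < N)%nat -> (i < N)%nat -> i <> k ->
  splay_age N (S k) i = S (splay_age N k i).
Proof. intros; unfold splay_age; destruct (Nat.ltb_spec i k), (Nat.ltb_spec i (S k)); lia. Qed.

Lemma splay_age_fired N k : splay_age N (S k) k = 0%nat.
Proof. unfold splay_age; destruct (Nat.ltb_spec k (S k)); lia. Qed.

Lemma splay_age_period N i : (i < N)%nat -> splay_age N N i = splay_age N 0 i.
Proof. intros; unfold splay_age; destruct (Nat.ltb_spec i N), (Nat.ltb_spec i 0); lia. Qed.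

(* Every unit is at phase z_{age} before each event, so event k is the
   firing of unit k alone, followed by a drift of length sigma; after N
   events the state repeats. *)
Lemma splay_events N U Uinv Rst e sigma :
  (1 <= N)%nat -> 0 < sigma -> U 1 = 1 -> Rst 0 = 0 -> Uinv 0 = 0 ->
  splay_period U Uinv e (N - 1) sigma ->
  exists (psi : nat -> nat -> R) (f : nat -> nat),
    psi 0%nat 0%nat = 1 /\
    f 0%nat = 0%nat /\
    (forall k, (k < N)%nat ->
       (f k < N)%nat /\
       (forall i, avalanche N (hom_coupling e) U (psi k) i = Nat.eqb i (f k)) /\
       next_event N (hom_coupling e) U Uinv Rst (psi k) sigma (psi (S k))) /\
    (forall k l, (k < N)%nat -> (l < N)%nat -> f k = f l -> k = l) /\
    (forall i, (i < N)%nat -> psi N i = psi 0%nat i).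
Proof.
  intros HN Hsigma HU1 HR0 HUinv0 [Hlast Hbelow].
  set (z := splay_orbit U Uinv e sigma).
  assert (Hle : forall m, (m <= N - 1)%nat -> z m <= 1).
  { intros m Hm. destruct (Nat.eq_dec m (N - 1)) as [->|]; [unfold z; lra|].
    destruct (Hbelow m) as [Hm' _]; [lia|unfold z; lra]. }
  exists (fun k i => z (splay_age N k i)), (fun k => k).
  split; [|split; [reflexivity|split; [|split]]].
  - cbn beta. rewrite splay_age_self by lia. exact Hlast.
  - intros k Hk.
    assert (Hfiring : z (splay_age N k k) = 1) by (rewrite splay_age_self; auto).
    assert (Hothers : forall i, (i < N)%nat -> i <> k ->
              z (splay_age N k i) < 1 /\ U (z (splay_age N k i)) + e < 1)
      by (intros; apply Hbelow, splay_age_other; lia).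
    split; [exact Hk|split; [exact (avalanche_single N e U _ k Hk HU1 Hfiring Hothers)|]].
    split; [lra|split; [|split]].
    + intros i Hi.
      rewrite (post_event_single N e U Uinv Rst _ k i Hk HU1 Hfiring Hothers HR0 HUinv0).
      destruct (Nat.eqb_spec i k) as [->|Hik].
      * rewrite splay_age_fired. unfold z, splay_orbit, Smap. simpl. ring.
      * rewrite splay_age_succ by assumption. reflexivity.
    + intros i Hi. apply Hle. unfold splay_age; destruct (Nat.ltb_spec i (S k)); lia.
    + destruct (Nat.ltb_spec (S k) N).
      * exists (S k). split; [assumption|]. cbn beta.
        rewrite splay_age_self by assumption. exact Hlast.
      * exists 0%nat. split; [lia|]. cbn beta.
        replace (S k) with N by lia. rewrite splay_age_period, splay_age_self by lia.
        exact Hlast.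
  - intros; lia.
  - intros i Hi. cbn beta. rewrite splay_age_period by exact Hi. reflexivity.
Qed.

(* U is strictly increasing on [0, oo): by the mean value theorem on
   (0, oo), and at 0 because U is nonnegative. *)
Lemma rise_strict U : rise_function U ->
  forall x y, 0 <= x -> x < y -> U x < U y.
Proof.
  intros [D [HD0 [Hder [_ [HD1 [Hnn [HU0 _]]]]]]].
  assert (Hpos : forall x y, 0 < x -> x < y -> U x < U y).
  { intros x y Hx Hxy.
    destruct (MVT_cor2 (D 0%nat) (D 1%nat) x y Hxy) as [c [Hmvt Hc]].
    { intros c Hc. apply Hder. lra. }
    rewrite !HD0 in Hmvt by lra.
    assert (0 < D 1%nat c * (y - x)) by (apply Rmult_lt_0_compat; [apply HD1|]; lra).
    lra. }
  intros x y Hx Hxy. destruct (Req_dec x 0) as [->|Hx0]; [|apply Hpos; lra].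
  rewrite HU0. apply Rle_lt_trans with (U (y / 2)); [apply Hnn; lra|apply Hpos; lra].
Qed.

(* U, extended by the constant U 0 to negative arguments, is continuous:
   it is differentiable on (0, oo) and right-continuous at 0. *)
Lemma rise_continuous U : rise_function U -> continuity (fun x => U (Rmax 0 x)).
Proof.
  intros [D [HD0 [Hder [Hrc [_ [_ [HU0 _]]]]]]] x.
  destruct (Rtotal_order x 0) as [Hx|[->|Hx]].
  - apply (continuity_pt_locally_ext (fun _ => U 0) _ (- x)); [lra| |].
    + intros y Hy. unfold Rdist in Hy. rewrite Rmax_left by (split_Rabs; lra). reflexivity.
    + apply continuity_pt_const. intros ? ?; reflexivity.
  - intros eps Heps. destruct (Hrc 0%nat eps Heps) as [d [Hd Hclose]].
    exists d. split; [lra|]. intros y [_ Hy]. simpl in Hy |- *. unfold Rdist in *.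
    rewrite (Rmax_left 0 0) by lra.
    destruct (Rle_or_lt y 0).
    + rewrite (Rmax_left 0 y) by lra. replace (U 0 - U 0) with 0 by ring.
      rewrite Rabs_R0. lra.
    + rewrite (Rmax_right 0 y), <- !HD0 by lra. apply Hclose. split_Rabs; lra.
  - apply (continuity_pt_locally_ext (D 0%nat) _ x); [lra| |].
    + intros y Hy. unfold Rdist in Hy. rewrite Rmax_right by (split_Rabs; lra).
      apply HD0. split_Rabs; lra.
    + apply derivable_continuous_pt. exists (D 1%nat x). apply Hder, Hx.
Qed.

Lemma lipschitz_continuous f :
  (forall a b, Rabs (f a - f b) <= Rabs (a - b)) -> continuity f.
Proof.
  intros Hlip x eps Heps. exists eps. split; [lra|].
  intros y [_ Hy]. simpl in Hy |- *. unfold Rdist in *.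
  eapply Rle_lt_trans; [apply Hlip|exact Hy].
Qed.

Section ClampedOrbit.

Variables (U Uinv : R -> R) (e : R).

Definition Uext (x : R) : R := U (Rmax 0 x).

Hypothesis U_strict : forall x y, 0 <= x -> x < y -> U x < U y.
Hypothesis Uext_cont : continuity Uext.
Hypothesis U_0 : U 0 = 0.
Hypothesis U_1 : U 1 = 1.
Hypothesis Uinv_U : forall x, 0 <= x -> Uinv (U x) = x.
Hypothesis e_pos : 0 < e.

Lemma U_mono x y : 0 <= x -> x <= y -> U x <= U y.
Proof. intros Hx [Hxy| ->]; [left; apply U_strict|]; lra. Qed.

Lemma Uext_eq x : 0 <= x -> Uext x = U x.
Proof. intros Hx. unfold Uext. rewrite Rmax_right by exact Hx. reflexivity. Qed.

Lemma Uext_mono x y : x <= y -> Uext x <= Uext y.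
Proof. intros Hxy. apply U_mono; [apply Rmax_l|apply Rle_max_compat_l, Hxy]. Qed.

Lemma one_lt_U2 : 1 < U 2.
Proof. rewrite <- U_1. apply U_strict; lra. Qed.

Lemma Uinv_spec y : 0 <= y <= U 2 -> 0 <= Uinv y <= 2 /\ U (Uinv y) = y.
Proof.
  intros Hy.
  destruct (f_interv_is_interv Uext 0 2 y) as [x [Hx Hxy]].
  - lra.
  - rewrite !Uext_eq by lra. rewrite U_0. exact Hy.
  - intros; apply Uext_cont.
  - rewrite Uext_eq in Hxy by lra. subst y. rewrite Uinv_U by lra. lra.
Qed.

Lemma Uinv_cont b : 0 < b < U 2 -> continuity_pt Uinv b.
Proof.
  intros Hb. apply (continuity_pt_recip_interv Uext Uinv 0 2).
  - lra.
  - intros x y Hx Hxy Hy. rewrite !Uext_eq by lra. apply U_strict; lra.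
  - intros x Hlo Hhi. rewrite !Uext_eq in Hlo, Hhi by lra. rewrite U_0 in Hlo.
    unfold comp, id. destruct (Uinv_spec x) as [Hr Hu]; [lra|].
    rewrite Uext_eq by lra. exact Hu.
  - intros x Hlo Hhi. rewrite !Uext_eq in Hlo, Hhi by lra. rewrite U_0 in Hlo.
    apply Uinv_spec. lra.
  - intros; apply Uext_cont.
  - rewrite !Uext_eq by lra. rewrite U_0. exact Hb.
Qed.

(* Clamping to [min e 1, 1] keeps the argument of Uinv inside (0, U 2),
   where Uinv is continuous; it is inactive on [e, 1]. *)
Definition clamp (y : R) : R := Rmin (Rmax y (Rmin e 1)) 1.

Lemma clamp_range y : Rmin e 1 <= clamp y <= 1.
Proof. unfold clamp, Rmin, Rmax. repeat destruct Rle_dec; lra. Qed.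

Lemma clamp_id y : e <= y <= 1 -> clamp y = y.
Proof. unfold clamp, Rmin, Rmax. repeat destruct Rle_dec; lra. Qed.

Lemma clamp_top y : 1 <= y -> clamp y = 1.
Proof. unfold clamp, Rmin, Rmax. repeat destruct Rle_dec; lra. Qed.

Lemma clamp_mono a b : a <= b -> clamp a <= clamp b.
Proof. unfold clamp, Rmin, Rmax. repeat destruct Rle_dec; lra. Qed.

Lemma clamp_lipschitz a b : Rabs (clamp a - clamp b) <= Rabs (a - b).
Proof. unfold clamp, Rmin, Rmax. repeat destruct Rle_dec; split_Rabs; lra. Qed.

Definition Uinv_clamped (y : R) : R := Uinv (clamp y).

Lemma clamp_inside y : 0 < clamp y < U 2.
Proof.
  pose proof (clamp_range y). pose proof one_lt_U2.
  assert (0 < Rmin e 1) by (apply Rmin_glb_lt; lra). lra.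
Qed.

Lemma Uinv_clamped_spec y : 0 <= Uinv_clamped y /\ U (Uinv_clamped y) = clamp y.
Proof.
  pose proof (clamp_inside y) as Hin.
  unfold Uinv_clamped. destruct (Uinv_spec (clamp y)) as [Hr Hu]; [split; lra|].
  split; [lra|exact Hu].
Qed.

Lemma Uinv_clamped_cont : continuity Uinv_clamped.
Proof.
  intros x. apply (continuity_pt_comp clamp Uinv).
  - apply lipschitz_continuous, clamp_lipschitz.
  - apply Uinv_cont, clamp_inside.
Qed.

Lemma Uinv_clamped_mono a b : a <= b -> Uinv_clamped a <= Uinv_clamped b.
Proof.
  intros Hab. destruct (Uinv_clamped_spec a) as [Ha Hua].
  destruct (Uinv_clamped_spec b) as [Hb Hub]. pose proof (clamp_mono a b Hab).
  destruct (Rle_or_lt (Uinv_clamped a) (Uinv_clamped b)) as [|Hn]; [assumption|].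
  assert (U (Uinv_clamped b) < U (Uinv_clamped a)) by (apply U_strict; lra). lra.
Qed.

Lemma Uinv_clamped_top y : 1 <= y -> Uinv_clamped y = 1.
Proof.
  intros Hy. unfold Uinv_clamped. rewrite clamp_top, <- U_1 at 1 by exact Hy.
  apply Uinv_U; lra.
Qed.

Definition clamped_step (sigma x : R) : R := Uinv_clamped (Uext x + e) + sigma.
Definition clamped_orbit (sigma : R) (m : nat) : R := Nat.iter m (clamped_step sigma) sigma.

Lemma clamped_orbit_cont m : continuity (fun sigma => clamped_orbit sigma m).
Proof.
  induction m as [|m IH].
  - exact (derivable_continuous id derivable_id).
  - change (continuity (fun s => Uinv_clamped (Uext (clamped_orbit s m) + e) + s)).
    apply (continuity_plus (fun s => Uinv_clamped (Uext (clamped_orbit s m) + e)) id);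
      [|exact (derivable_continuous id derivable_id)].
    apply (continuity_comp (fun s => Uext (clamped_orbit s m) + e) Uinv_clamped);
      [|apply Uinv_clamped_cont].
    apply (continuity_plus (fun s => Uext (clamped_orbit s m)) (fun _ => e));
      [|apply continuity_const; intros ? ?; reflexivity].
    apply (continuity_comp (fun s => clamped_orbit s m) Uext); assumption.
Qed.

Lemma clamped_orbit_ge sigma m : 0 <= sigma -> sigma <= clamped_orbit sigma m.
Proof.
  intros Hs. destruct m as [|m]; simpl; [lra|]. unfold clamped_step at 1.
  match goal with |- context [Uinv_clamped ?y] => destruct (Uinv_clamped_spec y) end. lra.
Qed.

Lemma clamped_orbit_nonneg sigma m : 0 <= sigma -> 0 <= clamped_orbit sigma m.
Proof. intros Hs. pose proof (clamped_orbit_ge sigma m Hs). lra. Qed.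

(* The orbit is nondecreasing in m: true for the first step, and propagated
   because the clamped step map is monotone. *)
Lemma clamped_orbit_succ sigma m : 0 <= sigma ->
  clamped_orbit sigma m <= clamped_orbit sigma (S m).
Proof.
  intros Hs. induction m as [|m IH].
  - simpl. unfold clamped_step. destruct (Uinv_clamped_spec (Uext sigma + e)). lra.
  - change (clamped_step sigma (clamped_orbit sigma m) <=
            clamped_step sigma (clamped_orbit sigma (S m))).
    unfold clamped_step. apply Rplus_le_compat_r, Uinv_clamped_mono,
      Rplus_le_compat_r, Uext_mono, IH.
Qed.

Lemma clamped_orbit_incr sigma m m' : 0 <= sigma -> (m <= m')%nat ->
  clamped_orbit sigma m <= clamped_orbit sigma m'.
Proof.
  intros Hs Hmm'. induction Hmm' as [|m' _ IH]; [lra|].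
  apply Rle_trans with (1 := IH), clamped_orbit_succ, Hs.
Qed.

Lemma clamped_orbit_zero m : INR m * e <= 1 -> U (clamped_orbit 0 m) = INR m * e.
Proof.
  induction m as [|m IH]; intros Hm.
  - simpl. rewrite U_0. ring.
  - rewrite S_INR in Hm. assert (0 <= INR m) by apply pos_INR.
    change (U (clamped_step 0 (clamped_orbit 0 m)) = INR (S m) * e).
    unfold clamped_step. rewrite Uext_eq by (apply clamped_orbit_nonneg; lra).
    rewrite IH by nra. rewrite Rplus_0_r, S_INR.
    destruct (Uinv_clamped_spec (INR m * e + e)) as [_ ->].
    rewrite clamp_id by nra. ring.
Qed.

(* Intermediate value theorem on [0, 1]. *)
Lemma clamped_period_exists n : INR n * e < 1 ->
  exists sigma, 0 < sigma /\ clamped_orbit sigma n = 1.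
Proof.
  intros Hn.
  assert (Hlow : clamped_orbit 0 n < 1).
  { destruct (Rlt_or_le (clamped_orbit 0 n) 1) as [|Hc]; [assumption|].
    pose proof (U_mono 1 (clamped_orbit 0 n) ltac:(lra) ltac:(lra)).
    rewrite clamped_orbit_zero in * by lra. lra. }
  assert (Hhigh : 1 <= clamped_orbit 1 n) by (apply clamped_orbit_ge; lra).
  destruct (IVT_cor (fun s => clamped_orbit s n - 1) 0 1) as [s [Hs Hzero]].
  - apply (continuity_minus (fun s => clamped_orbit s n) (fun _ => 1));
      [apply clamped_orbit_cont|apply continuity_const; intros ? ?; reflexivity].
  - lra.
  - cbn beta. nra.
  - exists s. cbn beta in Hzero. split; [|lra].
    destruct Hs as [[Hs|<-] _]; [exact Hs|lra].
Qed.

(* Along an orbit reaching 1 at step n, the clamping is never active before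
   step n, so the clamped orbit is the true orbit and it is a splay period. *)
Lemma clamped_period_is_splay_period sigma n :
  0 < sigma -> clamped_orbit sigma n = 1 -> splay_period U Uinv e n sigma.
Proof.
  intros Hs Hn.
  assert (Hsub : forall m, (m < n)%nat -> U (clamped_orbit sigma m) + e < 1).
  { intros m Hm. destruct (Rlt_or_le (U (clamped_orbit sigma m) + e) 1) as [|Hc]; [assumption|].
    pose proof (clamped_orbit_incr sigma (S m) n ltac:(lra) Hm) as Hnext.
    change (clamped_step sigma (clamped_orbit sigma m) <= clamped_orbit sigma n) in Hnext.
    unfold clamped_step in Hnext.
    rewrite Uext_eq, Uinv_clamped_top in Hnext by (try apply clamped_orbit_nonneg; lra).
    lra. }
  assert (Hbelow : forall m, (m < n)%nat -> clamped_orbit sigma m < 1).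
  { intros m Hm. destruct (Rlt_or_le (clamped_orbit sigma m) 1) as [|Hc]; [assumption|].
    pose proof (U_mono 1 (clamped_orbit sigma m) ltac:(lra) ltac:(lra)).
    pose proof (Hsub m Hm). lra. }
  assert (Hagree : forall m, (m <= n)%nat -> splay_orbit U Uinv e sigma m = clamped_orbit sigma m).
  { induction m as [|m IH]; intros Hm.
    - unfold splay_orbit, Smap. simpl. ring.
    - change (Hmap U Uinv e (splay_orbit U Uinv e sigma m) + sigma =
              Uinv_clamped (Uext (clamped_orbit sigma m) + e) + sigma).
      rewrite IH by lia. unfold Hmap, Uinv_clamped.
      rewrite Uext_eq by (apply clamped_orbit_nonneg; lra).
      rewrite clamp_id; [reflexivity|].
      pose proof (Hsub m ltac:(lia)). pose proof (U_mono 0 (clamped_orbit sigma m)).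
      pose proof (clamped_orbit_ge sigma m). lra. }
  split; [rewrite Hagree by lia; exact Hn|].
  intros m Hm. rewrite Hagree by lia. split; [apply Hbelow|apply Hsub]; exact Hm.
Qed.

Lemma splay_period_exists n : INR n * e < 1 ->
  exists sigma, 0 < sigma /\ splay_period U Uinv e n sigma.
Proof.
  intros Hn. destruct (clamped_period_exists n Hn) as [s [Hs Hper]].
  exists s. split; [exact Hs|]. apply clamped_period_is_splay_period; assumption.
Qed.

End ClampedOrbit.

Theorem mainTheorem2 (N : nat) (U Uinv Rst : R -> R) (e : R) :
  (1 <= N)%nat ->
  rise_function U -> rise_inverse U Uinv -> partial_reset Rst ->
  0 < e -> INR (N - 1) * e < 1 ->
  exists sigma : R, 0 < sigma /\
    Nat.iter (N - 1) (fun x => Smap sigma (Hmap U Uinv e x)) (Smap sigma 0) = 1 /\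
    exists (psi : nat -> nat -> R) (f : nat -> nat),
      psi 0%nat 0%nat = 1 /\
      f 0%nat = 0%nat /\
      (forall k, (k < N)%nat ->
         (f k < N)%nat /\
         (forall i, avalanche N (hom_coupling e) U (psi k) i = Nat.eqb i (f k)) /\
         next_event N (hom_coupling e) U Uinv Rst (psi k) sigma (psi (S k))) /\
      (forall k l, (k < N)%nat -> (l < N)%nat -> f k = f l -> k = l) /\
      (forall i, (i < N)%nat -> psi N i = psi 0%nat i).
Proof.
  intros HN HU HUinv [_ HR0] He HNe.
  pose proof (rise_strict U HU) as Hstrict.
  pose proof (rise_continuous U HU) as Hcont.
  destruct HU as [_ [_ [_ [_ [_ [_ [HU0 HU1]]]]]]].
  assert (HUinv0 : Uinv 0 = 0) by (rewrite <- HU0 at 1; apply HUinv; lra).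
  destruct (splay_period_exists U Uinv e Hstrict Hcont HU0 HU1 HUinv He (N - 1) HNe)
    as [sigma [Hsigma Hperiod]].
  exists sigma. split; [exact Hsigma|]. split; [exact (proj1 Hperiod)|].
  apply splay_events; assumption.
Qed.
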